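(* In the changepoint model with negative-binomial segment lengths described in the context, for $0<j\le n$ and every integer $i\ge n-j$, $$P(S=i,\,C_n=j\mid Y_{1:n}=y_{1:n})=\frac{\tilde c_{jn}\,\mathrm{NB}(i;q,r)}{\sum_{\ell=n-j}^\infty\mathrm{NB}(\ell;q,r)}.$$
   Context: Let $\mathrm{NB}(\ell;q,r)=\binom{r-1+\ell}{\ell}q^r(1-q)^\ell$ ($\ell=0,1,2,\dots$) be the negative binomial probability mass function with success probability $q\in(0,1)$ and number of successes $r\in\mathbb N_{\ge1}$. Model: fix $n\ge1$ and data $y_1,\dots,y_n$; $(\mathbb X,\mathcal X)$, $(\mathbb Y,\mathcal Y)$ standard Borel, $\psi$ $\sigma$-finite on $\mathbb Y$, $\mathcal J$ a probability measure on $\mathbb X$. Let $q_{0i}\in[0,1]$ ($i\ge1$) be arbitrary and for $0<j<i$ let $q_{ji}=\sum_{\ell\ge i-j}\mathrm{NB}(\ell;q,r)/\sum_{\ell\ge i-j-1}\mathrm{NB}(\ell;q,r)$. The changepoint process $(C_i)_{i\ge1}$, $C_i\in\{0,\dots,i\}$, is a Markov chain with $P(C_1=0)=q_{01}$, $P(C_1=1)=1-q_{01}$, and for $i\ge2$: $P(C_i=j\mid C_{i-1}=j)=q_{ji}$, $P(C_i=i\mid C_{i-1}=j)=1-q_{ji}$; it is defined for all $i\ge1$ (beyond $n$). For $i=1,\dots,n$: $X_1\sim\mathcal J$; for $i\ge2$, $X_i\sim\mathcal J$ (fresh) if $C_i=i$ and $X_i=X_{i-1}$ if $C_i<i$; $Y_i$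 depends on all other variables only through $X_i$ with density $p(Y_i=y\mid X_i=x)$ w.r.t. $\psi$; given $C_n$, the future chain $(C_k)_{k>n}$ is independent of $X_{1:n},Y_{1:n},C_{1:n-1}$. Assume $\int\prod_{\ell=j}^ip(Y_\ell=y_\ell\mid X_\ell=x)\mathcal J(dx)>0$ for $0<j\le i\le n$. Let $\tau=\min\{k>n:C_k=k\}$ and $S=\tau-1-C_n$ (the length, counted as end minus start, of the segment containing $n$). Let $\tilde c_{jn}=P(C_n=j\mid Y_{1:n}=y_{1:n})$. *)

From HB Require Import structures.
From mathcomp Require Import all_boot all_order all_algebra.
From mathcomp Require Import all_classical all_reals all_analysis.
Set Implicit Arguments. Unset Strict Implicit. Unset Printing Implicit Defensive.
Import Order.TTheory GRing.Theory Num.Theory.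
Local Open Scope ring_scope.

Definition NB {R : realType} (q : R) (r l : nat) : R :=
  ('C(r.-1 + l, l))%:R * q ^+ r * (1 - q) ^+ l.

Definition NBtail {R : realType} (q : R) (r k : nat) : R :=
  limn (fun N => \sum_(k <= l < N) NB q r l).

Definition hazq {R : realType} (q : R) (r : nat) (q0 : nat -> R) (a i : nat) : R :=
  if a == 0%N then q0 i else NBtail q r (i - a) / NBtail q r (i - a).-1.

(* P(C_1 = b) *)
Definition cinit {R : realType} (q0 : nat -> R) (b : nat) : R :=
  if b == 0%N then q0 1%N else if b == 1%N then 1 - q0 1%N else 0.

(* P(C_i = b | C_{i-1} = a), i >= 2 *)
Definition ctrans {R : realType} (q : R) (r : nat) (q0 : nat -> R) (i a b : nat) : R :=
  if b == i then 1 - hazq q r q0 a i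
  else if b == a then hazq q r q0 a i else 0.

(* A trajectory (C_1, ..., C_m) of the changepoint chain up to horizon m;
   entry k : 'I_m stores C_{k+1} (values in 0..m). *)
Definition cpath (m : nat) := {ffun 'I_m -> 'I_m.+1}.

(* C_t for 1 <= t <= m (0 outside this range). *)
Definition cpat {m : nat} (c : cpath m) (t : nat) : nat :=
  if t is t'.+1 then
    (if (insub t' : option 'I_m) is Some k then nat_of_ord (c k) else 0%N)
  else 0%N.

Definition chainprob {R : realType} (q : R) (r : nat) (q0 : nat -> R)
  (m : nat) (c : cpath m) : R :=
  cinit q0 (cpat c 1) * \prod_(2 <= t < m.+1) ctrans q r q0 t (cpat c t.-1) (cpat c t).

Definition seglik {R : realType} {dX} {X : measurableType dX} {Y : Type}
  (J : probability X R) (dens : nat -> X -> Y -> R) (y : nat -> Y) (a b : nat)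
  : \bar R :=
  (\int[J]_x (\prod_(a <= l < b.+1) dens l x (y l))%:E)%E.

Definition nextstart (n : nat) {m : nat} (c : cpath m) (a : nat) : nat :=
  head n.+1 [seq t <- iota a.+1 (n - a) | cpat c t == t].

(* p(Y_{1:n} = y_{1:n} | C_{1:n} = c_{1:n}): X_1 ~ J, fresh X_t ~ J when C_t = t
   (t >= 2), X_t = X_{t-1} otherwise; Y_t | X_t with density dens t. *)
Definition lik {R : realType} {dX} {X : measurableType dX} {Y : Type}
  (J : probability X R) (dens : nat -> X -> Y -> R) (y : nat -> Y)
  (n : nat) {m : nat} (c : cpath m) : R :=
  \prod_(1 <= a < n.+1 | (a == 1%N) || (cpat c a == a))
     fine (seglik J dens y a (nextstart n c a).-1).

(* Joint density of (C_{1:m}, Y_{1:n}) at (c, y_{1:n}), for m >= n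
   (future chain depends on the past only through C_n). *)
Definition joint {R : realType} {dX} {X : measurableType dX} {Y : Type}
  (J : probability X R) (dens : nat -> X -> Y -> R) (y : nat -> Y)
  (q : R) (r : nat) (q0 : nat -> R) (n m : nat) (c : cpath m) : R :=
  chainprob q r q0 c * lik J dens y n c.

Definition post {R : realType} {dX} {X : measurableType dX} {Y : Type}
  (J : probability X R) (dens : nat -> X -> Y -> R) (y : nat -> Y)
  (q : R) (r : nat) (q0 : nat -> R) (n m : nat) (E : pred (cpath m)) : R :=
  (\sum_(c | E c) joint J dens y q r q0 n c) /
  (\sum_(c : cpath m) joint J dens y q r q0 n c).

(* The event {S = i, C_n = j} with tau = min{k > n : C_k = k}, S = tau - 1 - C_n;
   it is decided by C_1, ..., C_{j+i+1}. *)
Definition eventS (n j i : nat) : pred (cpath (j + i).+1) :=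
  fun c => [&& cpat c n == j,
               [forall k : 'I_(j + i).+1,
                  ((n < k.+1)%N && (k.+1 < (j + i).+1)%N) ==> (cpat c k.+1 != k.+1)]
             & cpat c (j + i).+1 == (j + i).+1].
Arguments eventS : clear implicits.

(* Given C_n = j, the chain stays at j until the first fresh start t (C_t = t),
   and at time t it restarts with probability 1 - hazq j t.  Along one segment the
   stay probabilities are ratios of consecutive negative binomial tails, so the
   probability of staying from n to j + i and restarting at j + i + 1 telescopes to
   NB(i) / NBtail(n - j).  The likelihood of y_{1:n} only depends on C_{1:n}, so
   summing out the chain beyond n leaves both the numerator and the normalising
   constant of the posterior unchanged except for this factor. *)

From HB Require Import structures.
From mathcomp Require Import all_boot all_order all_algebra.
From mathcomp Require Import all_classical all_reals all_analysis.
From mathcomp Require Import ring zify.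
Set Implicit Arguments. Unset Strict Implicit. Unset Printing Implicit Defensive.
Import Order.TTheory GRing.Theory Num.Theory.
Local Open Scope ring_scope.

Lemma negbin_series_partial_le1 (R : realDomainType) (x : R) : 0 <= x < 1 ->
  forall r N, (\sum_(l < N) ('C(r + l, l))%:R * x ^+ l) * (1 - x) ^+ r.+1 <= 1.
Proof.
move=> /andP[x_ge0 x_lt1]; have x1_ge0 : 0 <= 1 - x by rewrite subr_ge0 ltW.
elim=> [|r IHr] N.
  under eq_bigr => l _ do rewrite add0n binn mul1r.
  by rewrite expr1 mulrC -opprB mulNr -subrX1 opprB lerBlDr lerDl exprn_ge0.
elim: N => [|N IHN]; first by rewrite big_ord0 mul0r.
have pascal : \sum_(l < N.+1) ('C(r.+1 + l, l))%:R * x ^+ l =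
    \sum_(l < N.+1) ('C(r + l, l))%:R * x ^+ l +
    x * \sum_(l < N) ('C(r.+1 + l, l))%:R * x ^+ l.
  rewrite big_ord_recl [X in _ = X + _]big_ord_recl /= !addn0 !bin0 -addrA.
  rewrite big_distrr -big_split; congr (_ + _); apply: eq_bigr => l _.
  rewrite /bump /= !add1n addnS binS natrD mulrDl exprS addSn addnS.
  by congr (_ + _); ring.
rewrite pascal mulrDl exprS -[leRHS](subrK x); apply: lerD.
  by rewrite mulrCA ler_piMr.
by rewrite -mulrA -exprS ler_piMr.
Qed.

Section NegativeBinomialTail.
Variables (R : realType) (q : R) (r : nat).
Hypotheses (q_01 : 0 < q < 1) (r_gt0 : (0 < r)%N).

Lemma NB_gt0 l : 0 < NB q r l.
Proof.
case/andP: q_01 => q_gt0 q_lt1.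
by rewrite !mulr_gt0 ?exprn_gt0 ?subr_gt0 // ltr0n bin_gt0 leq_addl.
Qed.

Let NBsum k N := \sum_(k <= l < N) NB q r l.

Lemma NBsum_nondecreasing k : nondecreasing_seq (NBsum k).
Proof.
apply/nondecreasing_seqP => N; rewrite /NBsum.
have [kN|Nk] := leqP k N; first by rewrite big_nat_recr //= lerDl ltW ?NB_gt0.
by rewrite !big_geq //; exact: ltnW.
Qed.

Lemma NBsum_le1 k N : NBsum k N <= 1.
Proof.
have [q_gt0 q_lt1] := andP q_01.
have full : \sum_(0 <= l < N) NB q r l <= 1.
  rewrite big_mkord /NB -(prednK r_gt0).
  under eq_bigr => l _ do rewrite mulrAC.
  rewrite -big_distrl /= -[q in q ^+ _](subKr 1) negbin_series_partial_le1 //.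
  by rewrite subr_ge0 ltW //= ltrBlDr ltrDl.
have [kN|Nk] := leqP k N; last by rewrite /NBsum big_geq ?ler01 //; exact: ltnW.
apply: le_trans full; rewrite [leRHS](@big_cat_nat _ _ _ k) //= lerDr.
by rewrite sumr_ge0 // => l _; rewrite ltW ?NB_gt0.
Qed.

Lemma NBsum_cvg k : cvgn (NBsum k).
Proof.
apply: nondecreasing_is_cvgn; first exact: NBsum_nondecreasing.
by exists 1 => _ [N _ <-]; exact: NBsum_le1.
Qed.

Lemma NBtail_gt0 k : 0 < NBtail q r k.
Proof.
have := nondecreasing_cvgn_le (@NBsum_nondecreasing k) (@NBsum_cvg k) k.+1.
by rewrite /NBsum big_nat1; apply: lt_le_trans; exact: NB_gt0.
Qed.

Lemma NBtail_recl k : NBtail q r k = NB q r k + NBtail q r k.+1.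
Proof.
have : (NBsum k @ \oo --> NB q r k + NBtail q r k.+1)%classic.
  have shifted : ((fun N => NB q r k + NBsum k.+1 N) @ \oo -->
                   NB q r k + NBtail q r k.+1)%classic.
    by apply: cvgD; [exact: cvg_cst | exact: NBsum_cvg].
  apply: cvg_trans shifted.
  apply: near_eq_cvg; near=> N; rewrite /NBsum [in RHS]big_ltn //.
  by near: N; exists k.+1 => // N.
by move/cvg_lim => <-.
Unshelve. all: by end_near. Qed.

End NegativeBinomialTail.

Definition update (s : nat -> nat) (k b : nat) : nat -> nat :=
  fun t => if t == k then b else s t.

Definition depends_on_prefix (T : Type) (n : nat) (F : (nat -> nat) -> T) :=
  forall s1 s2, (forall t, (t <= n)%N -> s1 t = s2 t) -> F s1 = F s2.

Lemma update_prefix (T : Type) n m (F : (nat -> nat) -> T) s b :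
  depends_on_prefix n F -> (n <= m)%N -> F (update s m.+1 b) = F s.
Proof.
move=> F_prefix nm; apply: F_prefix => t tn.
by rewrite /update ltn_eqF // ltnS (leq_trans tn).
Qed.

Lemma cpatS m (c : cpath m) (k : 'I_m) : cpat c k.+1 = c k.
Proof. by rewrite /cpat valK. Qed.

Lemma cpat_out m (c : cpath m) t : (m <= t)%N -> cpat c t.+1 = 0%N.
Proof. by move=> mt; rewrite /cpat insubN // -leqNgt. Qed.

Lemma cpat_le m (c : cpath m) t : (cpat c t <= m)%N.
Proof.
case: t => [//|t]; have [tm|mt] := ltnP t m; last by rewrite cpat_out.
by rewrite (cpatS c (Ordinal tm)) -ltnS.
Qed.

Section ChangepointPaths.
Variable m : nat.

Definition cpath_rcons (c : cpath m) (b : 'I_m.+2) : cpath m.+1 :=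
  [ffun k => if unlift ord_max k is Some k' then widen_ord (leqnSn _) (c k') else b].

Definition cpath_belast (c : cpath m.+1) : cpath m :=
  [ffun k => inord (c (widen_ord (leqnSn _) k))].

Lemma cpat_rcons (c : cpath m) b : cpat (cpath_rcons c b) = update (cpat c) m.+1 b.
Proof.
apply: funext => -[//|t]; rewrite /update eqSS.
have [tm1|mt] := ltnP t m.+1; last by rewrite gtn_eqF // !cpat_out // (ltnW mt).
rewrite (cpatS _ (Ordinal tm1)) ffunE.
case: unliftP => [k|] /(congr1 val) tk; rewrite /= in tk.
  have {}tk : t = k by rewrite tk /bump leqNgt ltn_ord.
  have tm : (t < m)%N by rewrite tk.
  by rewrite ltn_eqF // (cpatS c (Ordinal tm)); congr (nat_of_ord (c _)); exact: val_inj.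
by rewrite tk eqxx.
Qed.

(* Only the paths of length m.+1 whose first m values are at most m are rcons of
   a path of length m, hence the hypothesis on G. *)
Lemma sum_cpathS (V : nmodType) (G : (nat -> nat) -> V) :
  (forall s t, (0 < t <= m)%N -> (m < s t)%N -> G s = 0) ->
  \sum_(c : cpath m.+1) G (cpat c) =
  \sum_(c : cpath m) \sum_(b : 'I_m.+2) G (update (cpat c) m.+1 b).
Proof.
move=> G_out; rewrite pair_big /=.
pose P (c : cpath m.+1) := [forall k : 'I_m, (c (widen_ord (leqnSn _) k) <= m)%N].
rewrite (bigID P) /= [X in _ + X]big1 ?addr0; last first.
  move=> c /forallPn [k]; rewrite -ltnNge => mk.
  by apply: (G_out _ k.+1); rewrite ?ltn_ord // (cpatS c (widen_ord (leqnSn _) k)).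
rewrite (reindex_onto (fun p => cpath_rcons p.1 p.2) (fun c => (cpath_belast c, c ord_max))).
  apply: eq_big => [[c b]|[c b] _]; last by rewrite cpat_rcons.
  have widen_neq_max (k : 'I_m) : widen_ord (leqnSn m) k = ord_max -> False.
    by move/(congr1 val) => /= km; move: (ltn_ord k); rewrite km ltnn.
  apply/andP; split.
    apply/forallP => k; rewrite ffunE; case: unliftP => [k' _|/(widen_neq_max k)//].
    by rewrite /= -ltnS.
  apply/eqP; congr (_, _); last by rewrite /cpath_rcons ffunE unlift_none.
  apply/ffunP => k; rewrite !ffunE; apply: val_inj => /=.
  case: unliftP => [k'|/(widen_neq_max k)//] /(congr1 val) kk'; rewrite /= in kk'.
  rewrite /= inordK; last by rewrite ltnS -ltnS.
  by congr (nat_of_ord (c _)); apply: val_inj; rewrite /= kk' /bump leqNgt ltn_ord.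
move=> c /forallP Pc; apply/ffunP => k; rewrite !ffunE /=.
case: unliftP => [k'|->//] ->; apply: val_inj => /=.
rewrite ffunE inordK ?ltnS ?Pc //; congr (nat_of_ord (c _)); apply: val_inj.
by rewrite /= /bump leqNgt ltn_ord.
Qed.

End ChangepointPaths.

Section ChangepointChain.
Variables (R : realType) (q : R) (r : nat) (q0 : nat -> R).
Local Notation hz := (hazq q r q0).
Local Notation tr := (ctrans q r q0).

(* chainprob c and lik c are chainp m (cpat c) and lik_seq (cpat c) by conversion;
   sequences nat -> nat avoid the dependency of cpath m on its length. *)
Definition chainp m (s : nat -> nat) : R :=
  cinit q0 (s 1%N) * \prod_(2 <= t < m.+1) tr t (s t.-1) (s t).

Lemma chainp_update m s b : (0 < m)%N ->
  chainp m.+1 (update s m.+1 b) = chainp m s * tr m.+1 (s m) b.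
Proof.
move=> m_gt0; rewrite /chainp big_nat_recr //= /update eqxx ltn_eqF // ltn_eqF //.
rewrite -mulrA; congr (_ * (_ * _)); apply: eq_big_nat => t /andP[t2 tm].
by rewrite !ltn_eqF // (leq_ltn_trans (leq_pred _)).
Qed.

Lemma ctrans_neq0 t a b : tr t a b != 0 -> b = t \/ b = a.
Proof.
rewrite /ctrans; have [->|_] := eqVneq b t; first by left.
by have [->|_] := eqVneq b a; [right | rewrite eqxx].
Qed.

Lemma chainp_neq0 m s : chainp m s != 0 ->
  (s 1 <= 1)%N /\ forall t, (2 <= t <= m)%N -> tr t (s t.-1) (s t) != 0.
Proof.
rewrite /chainp mulf_eq0 negb_or prodf_seq_neq0 => /andP[init_neq0 /allP tr_neq0].
split; first by move: init_neq0; rewrite /cinit; case: (s 1) => [|[|]] //=; rewrite eqxx.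
by move=> t /andP[t2 tm]; apply: tr_neq0; rewrite mem_index_iota t2 ltnS.
Qed.

Lemma chainp_neq0_le m s : chainp m s != 0 -> forall t, (0 < t <= m)%N -> (s t <= t)%N.
Proof.
move=> /chainp_neq0 [s1_le1 tr_neq0]; elim=> [//|[_ _ //|t IH]] /andP[_ tm].
have /ctrans_neq0 [->//|->] := tr_neq0 t.+2 tm.
by rewrite (leq_trans (IH _)) // (leq_trans _ tm).
Qed.

Lemma sum_ctrans m a (f : nat -> R) : (a <= m)%N ->
  \sum_(b < m.+2) tr m.+1 a b * f b = (1 - hz a m.+1) * f m.+1 + hz a m.+1 * f a.
Proof.
move=> am; rewrite (eq_bigr (fun b : 'I_m.+2 =>
    (if b == m.+1 :> nat then (1 - hz a m.+1) * f m.+1 else 0) +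
    (if b == a :> nat then hz a m.+1 * f a else 0))); last first.
  move=> b _; rewrite /ctrans; have [->|_] := eqVneq (b : nat) m.+1.
    by rewrite gtn_eqF ?addr0.
  by have [->|_] := eqVneq (b : nat) a; rewrite ?eqxx add0r ?mul0r.
by rewrite big_split -!big_mkcond !(big_ord1_eq _ (fun=> _)) ltnSn ltnS ltnW.
Qed.

Definition chain_sum m (F : (nat -> nat) -> R) : R :=
  \sum_(c : cpath m) chainp m (cpat c) * F (cpat c).

Lemma chain_sumS m F : (0 < m)%N ->
  chain_sum m.+1 F = chain_sum m (fun s =>
    \sum_(b < m.+2) tr m.+1 (s m) b * F (update s m.+1 b)).
Proof.
move=> m_gt0; rewrite /chain_sum (sum_cpathS (G := fun s => chainp m.+1 s * F s)).
  apply: eq_bigr => c _; rewrite big_distrr; apply: eq_bigr => b _.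
  by rewrite chainp_update // -mulrA.
move=> s t /andP[t_gt0 tm] mst.
have [->|/chainp_neq0_le s_le] := eqVneq (chainp m.+1 s) 0; first by rewrite mul0r.
have := s_le t; rewrite t_gt0 (leq_trans tm) // => /(_ isT) st_le.
by move: (leq_ltn_trans (leq_trans st_le tm) mst); rewrite ltnn.
Qed.

Lemma chain_sumS_prefix n m F : depends_on_prefix n F -> (0 < n <= m)%N ->
  chain_sum m.+1 F = chain_sum m F.
Proof.
move=> F_prefix /andP[n_gt0 nm]; rewrite chain_sumS ?(leq_trans n_gt0) //.
apply: eq_bigr => c _; rewrite (eq_bigr (fun b : 'I_m.+2 => tr m.+1 (cpat c m) b * F (cpat c))).
  by rewrite (sum_ctrans (fun=> F (cpat c))) ?cpat_le //; congr (_ * _); ring.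
by move=> b _; rewrite (update_prefix _ _ F_prefix).
Qed.

Lemma chain_sum_prefix n m F : depends_on_prefix n F -> (0 < n <= m)%N ->
  chain_sum m F = chain_sum n F.
Proof.
move=> F_prefix /andP[n_gt0 nm]; rewrite -(subnKC nm).
elim: (m - n)%N => [|d IH]; first by rewrite addn0.
by rewrite addnS (chain_sumS_prefix F_prefix) // n_gt0 leq_addr.
Qed.

Definition same_segment n j k (s : nat -> nat) : bool :=
  (s n == j) && all (fun t => s t != t) (index_iota n.+1 k.+1).

Lemma same_segmentS n j k s : (n <= k)%N ->
  same_segment n j k.+1 s = same_segment n j k s && (s k.+1 != k.+1).
Proof.
move=> nk; rewrite /same_segment -andbA /index_iota !subSS subSn // -[(k - n).+1]addn1 iotaD.
by rewrite all_cat /= andbT addSn subnKC.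
Qed.

Lemma same_segment_prefix n j k : (n <= k)%N -> depends_on_prefix k (same_segment n j k).
Proof.
move=> nk s1 s2 eq_s; rewrite /same_segment eq_s //; congr (_ && _).
by apply: eq_in_all => t; rewrite mem_index_iota ltnS => /andP[_ tk]; rewrite eq_s.
Qed.

Lemma same_segment_const n j k s : chainp k s != 0 -> same_segment n j k s -> (0 < n)%N ->
  forall t, (n <= t <= k)%N -> s t = j.
Proof.
move=> /chainp_neq0 [_ tr_neq0] /andP[/eqP sn /allP fresh] n_gt0.
elim=> [|t IH] /andP[nt tk]; first by move: (leq_trans n_gt0 nt).
have [<-//|nt'] := eqVneq n t.+1.
have nt1 : (n <= t)%N by rewrite -ltnS ltn_neqAle nt' nt.
have := tr_neq0 t.+1; rewrite ltnS (leq_trans n_gt0 nt1) tk => /(_ isT) /ctrans_neq0 [st|->].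
  by move: (fresh t.+1); rewrite mem_index_iota !ltnS nt1 tk st eqxx => /(_ isT).
by rewrite IH // nt1 ltnW.
Qed.

Lemma chain_sum_segment_next n j k L (phi : nat -> bool) :
  depends_on_prefix n L -> (0 < n <= k)%N ->
  chain_sum k.+1 (fun s => L s * (same_segment n j k s && phi (s k.+1))%:R) =
  chain_sum k (fun s => L s * (same_segment n j k s)%:R) *
    ((1 - hz j k.+1) * (phi k.+1)%:R + hz j k.+1 * (phi j)%:R).
Proof.
move=> L_prefix /andP[n_gt0 nk].
rewrite chain_sumS ?(leq_trans n_gt0) // /chain_sum big_distrl; apply: eq_bigr => c _.
set s := cpat c; rewrite (eq_bigr (fun b : 'I_k.+2 =>
    tr k.+1 (s k) b * (L s * (same_segment n j k s && phi b)%:R))); last first.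
  move=> b _; rewrite (update_prefix _ _ L_prefix) //.
  by rewrite (update_prefix _ _ (same_segment_prefix j nk)) // /update eqxx.
rewrite (sum_ctrans (fun b => L s * (same_segment n j k s && phi b)%:R)) ?cpat_le //.
have [->|chain_neq0] := eqVneq (chainp k s) 0; first by rewrite /= !mul0r.
case seg: (same_segment n j k s) => /=; last by ring.
by rewrite (same_segment_const chain_neq0 seg n_gt0 (t := k)) ?nk //=; ring.
Qed.

Lemma chain_sum_segment_stay n j k L :
  depends_on_prefix n L -> (0 < n <= k)%N -> (j <= k)%N ->
  chain_sum k.+1 (fun s => L s * (same_segment n j k.+1 s)%:R) =
  chain_sum k (fun s => L s * (same_segment n j k s)%:R) * hz j k.+1.
Proof.
move=> L_prefix /andP[n_gt0 nk] jk.
have -> : chain_sum k.+1 (fun s => L s * (same_segment n j k.+1 s)%:R) =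
    chain_sum k.+1 (fun s => L s * (same_segment n j k s && (s k.+1 != k.+1))%:R).
  by congr chain_sum; apply: funext => s; rewrite same_segmentS.
rewrite (chain_sum_segment_next j (fun b => b != k.+1)) ?n_gt0 // eqxx ltn_eqF ?ltnS //=.
by rewrite mulr0 add0r mulr1.
Qed.

Lemma chain_sum_segment_restart n j k L :
  depends_on_prefix n L -> (0 < n <= k)%N -> (j <= k)%N ->
  chain_sum k.+1 (fun s => L s * (same_segment n j k s && (s k.+1 == k.+1))%:R) =
  chain_sum k (fun s => L s * (same_segment n j k s)%:R) * (1 - hz j k.+1).
Proof.
move=> L_prefix nk jk.
rewrite (chain_sum_segment_next j (eq_op^~ k.+1)) // eqxx ltn_eqF ?ltnS //=.
by rewrite mulr0 addr0 mulr1.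
Qed.

Lemma chain_sum_segment_iter n j k L :
  depends_on_prefix n L -> (0 < n)%N -> (j <= n <= k)%N ->
  chain_sum k (fun s => L s * (same_segment n j k s)%:R) =
  chain_sum n (fun s => L s * (s n == j)%:R) * \prod_(n.+1 <= t < k.+1) hz j t.
Proof.
move=> L_prefix n_gt0 /andP[jn nk]; rewrite -(subnKC nk).
elim: (k - n)%N => [|d IH].
  rewrite addn0 big_geq // mulr1; congr chain_sum; apply: funext => s.
  by rewrite /same_segment /index_iota subnn andbT.
rewrite addnS chain_sum_segment_stay ?n_gt0 ?leq_addr ?(leq_trans jn (leq_addr _ _)) //.
by rewrite IH -mulrA [in RHS]big_nat_recr //= ltnS leq_addr.
Qed.

End ChangepointChain.

Section SegmentLength.
Variables (R : realType) (q : R) (r : nat) (q0 : nat -> R).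
Hypotheses (q_01 : 0 < q < 1) (r_gt0 : (0 < r)%N).

Lemma prod_hazq n j k : (0 < j <= n)%N -> (n <= k)%N ->
  \prod_(n.+1 <= t < k.+1) hazq q r q0 j t = NBtail q r (k - j) / NBtail q r (n - j).
Proof.
move=> /andP[j_gt0 jn] nk; rewrite -(subnKC nk).
elim: (k - n)%N => [|d IH].
  by rewrite addn0 big_geq // divff // (gt_eqF (NBtail_gt0 q_01 r_gt0 _)).
rewrite addnS big_nat_recr /= ?ltnS ?leq_addr // IH /hazq gtn_eqF //.
rewrite subSn ?(leq_trans jn (leq_addr _ _)) //=.
by field; rewrite !(gt_eqF (NBtail_gt0 q_01 r_gt0 _)).
Qed.

Lemma NB_restart_ratio i m :
  NBtail q r i / NBtail q r m * (1 - NBtail q r i.+1 / NBtail q r i) =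
  NB q r i / NBtail q r m.
Proof.
have Ti := NBtail_gt0 q_01 r_gt0 i; have Tm := NBtail_gt0 q_01 r_gt0 m.
rewrite (NBtail_recl q_01 r_gt0 i) in Ti *.
by field; rewrite !gt_eqF.
Qed.

Lemma chain_sum_segment_length n j i L :
  depends_on_prefix n L -> (0 < j <= n)%N -> (n - j <= i)%N ->
  chain_sum q r q0 (j + i).+1
    (fun s => L s * (same_segment n j (j + i) s && (s (j + i).+1 == (j + i).+1))%:R) =
  chain_sum q r q0 n (fun s => L s * (s n == j)%:R) * (NB q r i / NBtail q r (n - j)).
Proof.
move=> L_prefix /andP[j_gt0 jn] nji.
have n_gt0 := leq_trans j_gt0 jn; have nk : (n <= j + i)%N by lia.
rewrite chain_sum_segment_restart ?n_gt0 ?leq_addr // chain_sum_segment_iter ?jn //.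
by rewrite prod_hazq ?j_gt0 // /hazq gtn_eqF // -addnS !addKn -mulrA NB_restart_ratio.
Qed.

End SegmentLength.

Section Posterior.
Variables (R : realType) (dX : measure_display) (X : measurableType dX) (Y : Type).
Variables (J : probability X R) (dens : nat -> X -> Y -> R) (y : nat -> Y) (n : nat).

Definition lik_seq (s : nat -> nat) : R :=
  \prod_(1 <= a < n.+1 | (a == 1%N) || (s a == a))
     fine (seglik J dens y a (head n.+1 [seq t <- iota a.+1 (n - a) | s t == t]).-1).

Lemma lik_seq_prefix : depends_on_prefix n lik_seq.
Proof.
move=> s1 s2 eq_s; rewrite /lik_seq big_nat_cond [RHS]big_nat_cond.
apply: eq_big => [a|a /andP[/andP[_ an] _]].
  by case/boolP: (1 <= a < n.+1)%N => //= /andP[_ an]; rewrite eq_s.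
congr (fine (seglik _ _ _ _ (head _ _).-1)); apply: eq_in_filter => t.
by rewrite mem_iota addSn (subnKC (an : a <= n)%N) ltnS => /andP[_ tn]; rewrite eq_s.
Qed.

Lemma sum_joint (q : R) r q0 m :
  \sum_(c : cpath m) joint J dens y q r q0 n c = chain_sum q r q0 m lik_seq.
Proof. by []. Qed.

Lemma sum_joint_cond (q : R) r q0 m (E : pred (cpath m)) (P : pred (nat -> nat)) :
  (forall c, E c = P (cpat c)) ->
  \sum_(c | E c) joint J dens y q r q0 n c =
  chain_sum q r q0 m (fun s => lik_seq s * (P s)%:R).
Proof.
move=> EP; rewrite big_mkcond; apply: eq_bigr => c _.
by rewrite EP; case: (P _); rewrite ?mulr1 ?mulr0.
Qed.

End Posterior.

Lemma eventSE n j i (c : cpath (j + i).+1) : (n <= j + i)%N ->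
  eventS n j i c = same_segment n j (j + i) (cpat c) && (cpat c (j + i).+1 == (j + i).+1).
Proof.
move=> nji; rewrite /eventS /same_segment andbA; congr (_ && _ && _).
apply/forallP/allP => [fresh t|fresh k]; last first.
  by apply/implyP => /andP[nk kji]; apply: fresh; rewrite mem_index_iota nk.
rewrite mem_index_iota => /andP[nt tji]; case: t nt tji => [//|t] nt tji.
have tk : (t < (j + i).+1)%N by rewrite ltnW.
by have /implyP := fresh (Ordinal tk); apply; rewrite /= nt.
Qed.

Theorem mainTheorem14 (R : realType)
  (dX : measure_display) (X : measurableType dX)
  (dY : measure_display) (Y : measurableType dY)
  (psi : {measure set Y -> \bar R}) (J : probability X R)
  (dens : nat -> X -> Y -> R) (q : R) (r : nat) (q0 : nat -> R)
  (n : nat) (y : nat -> Y) :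
  sigma_finite setT psi ->
  (forall l x z, 0 <= dens l x z) ->
  (forall l z, measurable_fun setT (fun x => dens l x z)) ->
  (forall l x, measurable_fun setT (dens l x)) ->
  (forall l x, (\int[psi]_z (dens l x z)%:E = 1)%E) ->
  0 < q < 1 -> (0 < r)%N -> (forall i, 0 <= q0 i <= 1) -> (0 < n)%N ->
  (forall a b, (0 < a)%N -> (a <= b)%N -> (b <= n)%N ->
     (0 < seglik J dens y a b < +oo)%E) ->
  forall j i : nat, (0 < j <= n)%N -> (n - j <= i)%N ->
  post J dens y q r q0 n (eventS n j i) =
  post J dens y q r q0 n (fun c : cpath n => cpat c n == j) * NB q r i
    / NBtail q r (n - j).
Proof.
move=> _ _ _ _ _ q_01 r_gt0 _ n_gt0 _ j i /andP[j_gt0 jn] nji.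
have nk : (n <= j + i)%N by lia.
have lik_prefix : depends_on_prefix n (lik_seq J dens y n) by exact: lik_seq_prefix.
rewrite /post !sum_joint.
have -> : \sum_(c | eventS n j i c) joint J dens y q r q0 n c =
    chain_sum q r q0 (j + i).+1 (fun s => lik_seq J dens y n s *
      (same_segment n j (j + i) s && (s (j + i).+1 == (j + i).+1))%:R).
  by apply: sum_joint_cond => c; exact: eventSE.
rewrite (sum_joint_cond J dens y n q r q0 (P := fun s => s n == j)) //.
rewrite (chain_sum_segment_length q0 q_01 r_gt0 lik_prefix) ?j_gt0 //.
have n_le : (0 < n <= (j + i).+1)%N by rewrite n_gt0 (leqW nk).
rewrite (chain_sum_prefix q r q0 lik_prefix n_le).
by ring.
Qed.
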